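(* Let $\alpha,\beta$ be sets, $z\in\beta$, $\mathit{seq}:\beta\times\alpha\to\beta$ and $\mathit{comb}:\beta\times\beta\to\beta$, and write $x\oplus y$ for $\mathit{comb}(x,y)$. Let $\Gamma=\{\mathrm{foldl}(\mathit{seq},z,L) : L \text{ a finite list over }\alpha\}$. Then calls $\mathrm{aggregate}(z,\mathit{seq},\mathit{comb},\mathit{rdd})$ have deterministic outcomes if and only if both of the following hold: (1) $(\Gamma,\oplus,z)$ is a commutative monoid, i.e. $\oplus$ maps $\Gamma\times\Gamma$ into $\Gamma$, is associative and commutative on $\Gamma$, and $z$ is an identity for $\oplus$ on $\Gamma$; (2) for all finite lists $p_1,p_2$ over $\alpha$, $\mathrm{foldl}(\mathit{seq},z,p_1 \mathbin{+\!\!+} p_2)=\mathrm{foldl}(\mathit{seq},z,p_1)\oplus\mathrm{foldl}(\mathit{seq},z,p_2)$.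
   Context: Lists are finite; $\mathbin{+\!\!+}$ is list concatenation and $\mathrm{concat}$ concatenates a list of lists. For $f:B\times A\to B$, $b\in B$: $\mathrm{foldl}(f,b,[\,])=b$ and $\mathrm{foldl}(f,b,[x_1,\dots,x_n])=f(\cdots f(f(b,x_1),x_2)\cdots,x_n)$. An RDD over $\alpha$ is a list of lists over $\alpha$ (its ''partitions''). A partitioning is a function $P$ sending each list $L$ over $\alpha$ to an RDD obtained by splitting $L$ into consecutive (possibly empty) pieces $p_1,\dots,p_n$ with $p_1\mathbin{+\!\!+}\cdots\mathbin{+\!\!+}p_n=L$ and then arbitrarily permuting the list $[p_1,\dots,p_n]$. Define $\mathrm{aggregate}_{\mathrm{det}}(z,\mathit{seq},\mathit{comb},\mathit{rdd})=\mathrm{foldl}(\mathit{comb},z,[\mathrm{foldl}(\mathit{seq},z,q_1),\dots,\mathrm{foldl}(\mathit{seq},z,q_m)])$ for $\mathit{rdd}=[q_1,\dots,q_m]$. Calls $\mathrm{aggregate}(z,\mathit{seq},\mathit{comb},\mathit{rdd})$ are said to have deterministic outcomes if $\mathrm{aggregate}_{\mathrm{det}}(z,\mathit{seq},\mathit{comb},P(L))=\mathrm{foldl}(\mathit{seq},z,L)$ for all lists $L$ over $\alpha$ and all partitionings $P$. *)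

From Stdlib Require Import List Permutation.
Import ListNotations.

Definition foldl {A B : Type} (f : B -> A -> B) (b : B) (l : list A) : B :=
  fold_left f l b.

(* An RDD over alpha is a list of lists (its partitions). *)
Definition RDD (A : Type) : Type := list (list A).

(* P is a partitioning: for every list L, P L is obtained by splitting L into
   consecutive (possibly empty) pieces p_1..p_n with p_1 ++ ... ++ p_n = L,
   and then arbitrarily permuting the list [p_1; ...; p_n]. *)
Definition is_partitioning {A : Type} (P : list A -> RDD A) : Prop :=
  forall L : list A, exists pieces : list (list A),
    concat pieces = L /\ Permutation pieces (P L).

Definition aggregate_det {A B : Type} (z : B) (sq : B -> A -> B)
  (comb : B -> B -> B) (rdd : RDD A) : B :=
  foldl comb z (map (foldl sq z) rdd).

Definition deterministic_outcomes {A B : Type} (z : B) (sq : B -> A -> B)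
  (comb : B -> B -> B) : Prop :=
  forall P : list A -> RDD A, is_partitioning P ->
    forall L : list A, aggregate_det z sq comb (P L) = foldl sq z L.

Definition Gamma {A B : Type} (z : B) (sq : B -> A -> B) (b : B) : Prop :=
  exists L : list A, b = foldl sq z L.

Definition comm_monoid_on {B : Type} (G : B -> Prop) (comb : B -> B -> B) (z : B) : Prop :=
  (forall x y, G x -> G y -> G (comb x y)) /\
  (forall x y w, G x -> G y -> G w -> comb (comb x y) w = comb x (comb y w)) /\
  (forall x y, G x -> G y -> comb x y = comb y x) /\
  (forall x, G x -> comb z x = x /\ comb x z = x).

(* The partitioning that cuts L = p ++ q into [p; q] shows that determinism forces
   foldl sq z to turn ++ into comb, and the one that cuts it into [q; p] forces comb
   to commute on Gamma; the monoid laws on Gamma then follow from those of ++.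
   Conversely, a ++-to-comb homomorphism folds every RDD to foldl sq z of its
   concatenation, and commutativity makes that value invariant under permuting the
   partitions. *)

From Stdlib Require Import List Permutation.
Import ListNotations.

Section Aggregate.

Context {A B : Type} {z : B} {sq : B -> A -> B} {comb : B -> B -> B}.
Local Notation f := (foldl sq z).

Definition foldl_hom : Prop := forall p q : list A, f (p ++ q) = comb (f p) (f q).

Definition comb_comm_on_foldl : Prop :=
  forall p q : list A, comb (f p) (f q) = comb (f q) (f p).

Lemma comm_monoid_on_Gamma :
  foldl_hom -> comb_comm_on_foldl -> comm_monoid_on (Gamma z sq) comb z.
Proof.
  intros Hhom Hcomm.
  split; [|split; [|split]].
  - intros x y [p ->] [q ->]. exists (p ++ q). symmetry. apply Hhom.
  - intros x y w [p ->] [q ->] [r ->].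
    rewrite <- !Hhom, app_assoc. reflexivity.
  - intros x y [p ->] [q ->]. apply Hcomm.
  - intros x [p ->]. split.
    + exact (eq_sym (Hhom [] p)).
    + pose proof (Hhom p []) as Hp. rewrite app_nil_r in Hp. exact (eq_sym Hp).
Qed.

Lemma comb_comm_on_foldl_of_comm_monoid :
  comm_monoid_on (Gamma z sq) comb z -> comb_comm_on_foldl.
Proof.
  intros [_ [_ [Hcomm _]]] p q. apply Hcomm; [exists p | exists q]; reflexivity.
Qed.

Lemma aggregate_det_concat :
  foldl_hom -> forall rdd : RDD A, aggregate_det z sq comb rdd = f (concat rdd).
Proof.
  intros Hhom rdd.
  induction rdd as [|p rdd IH] using rev_ind; [reflexivity|].
  unfold aggregate_det, foldl in *.
  rewrite map_app, fold_left_app, IH, concat_app; simpl; rewrite app_nil_r.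
  exact (eq_sym (Hhom (concat rdd) p)).
Qed.

Lemma foldl_concat_Permutation :
  foldl_hom -> comb_comm_on_foldl ->
  forall l1 l2 : list (list A), Permutation l1 l2 -> f (concat l1) = f (concat l2).
Proof.
  intros Hhom Hcomm l1 l2 Hperm.
  induction Hperm as [| x l1 l2 _ IH | x y l | l1 l2 l3 _ IH12 _ IH23]; simpl.
  - reflexivity.
  - rewrite !Hhom, IH. reflexivity.
  - assert (Hyx : f (y ++ x) = f (x ++ y)) by (rewrite !Hhom; apply Hcomm).
    rewrite !app_assoc, (Hhom (y ++ x)), (Hhom (x ++ y)), Hyx. reflexivity.
  - congruence.
Qed.

Lemma deterministic_of_foldl_hom :
  foldl_hom -> comb_comm_on_foldl -> deterministic_outcomes z sq comb.
Proof.
  intros Hhom Hcomm P HP L.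
  destruct (HP L) as [pieces [Hconcat Hperm]].
  rewrite aggregate_det_concat by exact Hhom.
  rewrite <- (foldl_concat_Permutation Hhom Hcomm _ _ Hperm), Hconcat.
  reflexivity.
Qed.

Lemma is_partitioning_of_concat (cut : list A -> RDD A) :
  (forall L, concat (cut L) = L) -> is_partitioning cut.
Proof. intros Hcut L. exists (cut L). split; [apply Hcut | apply Permutation_refl]. Qed.

Lemma is_partitioning_rev (P : list A -> RDD A) :
  is_partitioning P -> is_partitioning (fun L => rev (P L)).
Proof.
  intros HP L. destruct (HP L) as [pieces [Hconcat Hperm]].
  exists pieces. split; [exact Hconcat|].
  exact (Permutation_trans Hperm (Permutation_rev _)).
Qed.

Definition split_at (n : nat) (L : list A) : RDD A := [firstn n L; skipn n L].

Lemma is_partitioning_split_at (n : nat) : is_partitioning (split_at n).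
Proof.
  apply is_partitioning_of_concat. intro L.
  unfold split_at. simpl. rewrite app_nil_r. apply firstn_skipn.
Qed.

Lemma split_at_length_app (p q : list A) : split_at (length p) (p ++ q) = [p; q].
Proof. unfold split_at. induction p as [|a p IH]; simpl; congruence. Qed.

Section Deterministic.

Hypothesis Hdet : deterministic_outcomes z sq comb.

Lemma comb_z_foldl_of_deterministic (L : list A) : comb z (f L) = f L.
Proof.
  apply (Hdet (fun L => [L])).
  apply is_partitioning_of_concat. intro L'. apply app_nil_r.
Qed.

Lemma foldl_hom_of_deterministic : foldl_hom.
Proof.
  intros p q.
  pose proof (Hdet _ (is_partitioning_split_at (length p)) (p ++ q)) as Hsplit.
  rewrite split_at_length_app in Hsplit.
  unfold aggregate_det in Hsplit. simpl in Hsplit.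
  rewrite comb_z_foldl_of_deterministic in Hsplit. exact (eq_sym Hsplit).
Qed.

Lemma comb_comm_on_foldl_of_deterministic : comb_comm_on_foldl.
Proof.
  intros p q.
  pose proof (Hdet _ (is_partitioning_rev _ (is_partitioning_split_at (length p))) (p ++ q))
    as Hswap.
  cbv beta in Hswap. rewrite split_at_length_app in Hswap.
  unfold aggregate_det in Hswap. simpl in Hswap.
  rewrite comb_z_foldl_of_deterministic in Hswap.
  rewrite <- foldl_hom_of_deterministic. exact (eq_sym Hswap).
Qed.

End Deterministic.

End Aggregate.

Theorem lemma1 (A B : Type) (z : B) (sq : B -> A -> B) (comb : B -> B -> B) :
  deterministic_outcomes z sq comb <->
  (comm_monoid_on (Gamma z sq) comb z /\
   (forall p1 p2 : list A,
      foldl sq z (p1 ++ p2) = comb (foldl sq z p1) (foldl sq z p2))).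
Proof.
  split.
  - intro Hdet.
    pose proof (foldl_hom_of_deterministic Hdet) as Hhom.
    split; [|exact Hhom].
    exact (comm_monoid_on_Gamma Hhom (comb_comm_on_foldl_of_deterministic Hdet)).
  - intros [Hmonoid Hhom].
    exact (deterministic_of_foldl_hom Hhom (comb_comm_on_foldl_of_comm_monoid Hmonoid)).
Qed.
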